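(* Let $\Bbbk$ be a unital ring and $n,r$ positive integers. If $r\ge n$ then $\Phi_{n,r}:\Bbbk W_n\to\operatorname{End}_\Bbbk(\mathbf V^{\otimes r})$ is faithful. If $r+1\ge n$ then $\Phi_{n,r+1/2}:\Bbbk W_{n-1}\to\operatorname{End}_\Bbbk(\mathbf V^{\otimes r}\otimes\mathbf v_n)$ is faithful.
   Context: $\mathbf V$ is a free $\Bbbk$-module with basis $\mathbf v_1,\dots,\mathbf v_n$. $W_n$ is the symmetric group on $\{1,\dots,n\}$ acting on $\mathbf V^{\otimes r}$ by $w(\mathbf v_{j_1}\otimes\cdots\otimes\mathbf v_{j_r})=\mathbf v_{w(j_1)}\otimes\cdots\otimes\mathbf v_{w(j_r)}$ extended linearly; $\Phi_{n,r}$ is the resulting representation. $W_{n-1}=\{w\in W_n:w(n)=n\}$ preserves $\mathbf V^{\otimes r}\otimes\mathbf v_n\subset\mathbf V^{\otimes(r+1)}$, and $\Phi_{n,r+1/2}$ is the resulting representation. *)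

From mathcomp Require Import all_boot all_order all_algebra all_fingroup.
Set Implicit Arguments. Unset Strict Implicit. Unset Printing Implicit Defensive.
Import GRing.Theory.
Local Open Scope ring_scope.

(* Basis of V^{(x) r}: the simple tensors v_{j_1} (x) ... (x) v_{j_r},
   indexed by functions j : 'I_r -> 'I_n (index i = v_{i+1}).
   Since the index set is finite, V^{(x) r} is identified with the free
   module of coordinate vectors over that basis. *)
Definition tensor_space (R : pzRingType) (n r : nat) :=
  {ffun {ffun 'I_r -> 'I_n} -> R}.

(* action of w in W_n = 'S_n:  w . e_j = e_{w o j}, i.e. on coordinates
   (w . x)(k) = x (w^-1 o k). *)
Definition perm_act (R : pzRingType) (n r : nat) (w : 'S_n)
  (x : tensor_space R n r) : tensor_space R n r :=
  [ffun k : {ffun 'I_r -> 'I_n} => x [ffun i => (w^-1)%g (k i)]].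

(* Elements of the group algebra k W_n: coefficient functions 'S_n -> k.
   Phi a is the linear extension of the action. *)
Definition Phi (R : pzRingType) (n r : nat) (a : {ffun 'S_n -> R})
  (x : tensor_space R n r) : tensor_space R n r :=
  [ffun k => \sum_(w : 'S_n) a w * perm_act w x k].

(* W_{n-1} = stabiliser of the last point n (index n-1). *)
Definition fixes_last (n : nat) (w : 'S_n) : Prop :=
  forall i : 'I_n, val i = n.-1 -> w i = i.

(* the embedding V^{(x) r} -> V^{(x) (r+1)}, x |-> x (x) v_n *)
Definition tensor_vn (R : pzRingType) (n r : nat) (x : tensor_space R n r)
  : tensor_space R n r.+1 :=
  [ffun k : {ffun 'I_r.+1 -> 'I_n} => if val (k ord_max) == n.-1
             then x [ffun i => k (widen_ord (leqnSn r) i)] else 0].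

From mathcomp Require Import all_boot all_order all_algebra all_fingroup.
Set Implicit Arguments.
Unset Strict Implicit.
Unset Printing Implicit Defensive.
Local Open Scope ring_scope.
Import GRing.Theory.

(* For a basis tensor e_j, the coordinate of [a . e_j] at e_(w o j) is the sum
   of the a w' over the w' with w' o j = w o j.  When j : 'I_r -> 'I_n is onto,
   which is possible as soon as r >= n, w o j determines w, so this coordinate
   is a w itself.  For W_(n-1) it suffices that j covers all points but the
   last, hence r + 1 >= n, once one notes that x |-> x (x) v_n intertwines the
   two actions and is injective. *)

Section TensorAction.

Variables (R : pzRingType) (n r : nat).

Definition tensor_basis (j : {ffun 'I_r -> 'I_n}) : tensor_space R n r :=
  [ffun k => (k == j)%:R].

Definition perm_comp (w : 'S_n) (j : {ffun 'I_r -> 'I_n}) : {ffun 'I_r -> 'I_n} :=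
  [ffun i => w (j i)].

Lemma perm_act_basis w j :
  perm_act w (tensor_basis j) = tensor_basis (perm_comp w j).
Proof.
apply/ffunP => k; rewrite !ffunE; congr (nat_of_bool _)%:R.
by apply/idP/idP => [/eqP <-|/eqP ->]; apply/eqP/ffunP => i;
  rewrite !ffunE ?permKV ?permK.
Qed.

Lemma Phi_basis a j k :
  Phi a (tensor_basis j) k = \sum_(w | perm_comp w j == k) a w.
Proof.
rewrite ffunE [RHS]big_mkcond; apply: eq_bigr => w _.
by rewrite perm_act_basis ffunE eq_sym; case: eqP; rewrite ?mulr1 ?mulr0.
Qed.

Lemma Phi_basis_faithful (a : {ffun 'S_n -> R}) j :
  {in [pred w | a w != 0] &, injective (perm_comp^~ j)} ->
  Phi a (tensor_basis j) = 0 -> a = 0.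
Proof.
move=> comp_inj Phi_j0; apply/ffunP => w0; rewrite ffunE.
have [//|aw0] := eqVneq (a w0) 0.
have := congr1 (fun x : tensor_space R n r => x (perm_comp w0 j)) Phi_j0.
rewrite Phi_basis ffunE (bigD1 w0) //= big1 ?addr0 //.
move=> w /andP[/eqP comp_eq w_neq].
have [//|aw] := eqVneq (a w) 0.
by rewrite (comp_inj _ _ aw aw0 comp_eq) eqxx in w_neq.
Qed.

Lemma perm_comp_inj (w w' : 'S_n) (j : {ffun 'I_r -> 'I_n}) :
  (forall m, m \notin codom j -> w m = w' m) ->
  perm_comp w j = perm_comp w' j -> w = w'.
Proof.
move=> eq_off comp_eq; apply/permP => m.
have [/codomP[i ->]|/eq_off//] := boolP (m \in codom j).
by move/ffunP/(_ i): comp_eq; rewrite !ffunE.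
Qed.

Lemma fixes_lastV (w : 'S_n) : fixes_last w -> fixes_last w^-1.
Proof. by move=> fix_w i /fix_w wi; rewrite -{1}wi permK. Qed.

Lemma fixes_last_val (w : 'S_n) m :
  fixes_last w -> (val (w m) == n.-1) = (val m == n.-1).
Proof.
move=> fix_w; apply/eqP/eqP => [wm_last|/fix_w-> //].
by rewrite -[m](permK w) (fixes_lastV fix_w wm_last).
Qed.

Lemma perm_act_tensor_vn w (x : tensor_space R n r) :
  fixes_last w -> perm_act w (tensor_vn x) = tensor_vn (perm_act w x).
Proof.
move=> fix_w; apply/ffunP => k.
rewrite !ffunE (fixes_last_val _ (fixes_lastV fix_w)).
by case: eqP => // _; congr (x _); apply/ffunP => i; rewrite !ffunE.
Qed.

Lemma Phi_tensor_vn (a : {ffun 'S_n -> R}) (x : tensor_space R n r) :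
  (forall w, a w != 0 -> fixes_last w) ->
  Phi a (tensor_vn x) = tensor_vn (Phi a x).
Proof.
move=> fix_supp; apply/ffunP => k.
transitivity (\sum_w a w * tensor_vn (perm_act w x) k).
  rewrite ffunE; apply: eq_bigr => w _.
  by have [->|/fix_supp fix_w] := eqVneq (a w) 0; rewrite ?mul0r ?perm_act_tensor_vn.
rewrite [RHS]ffunE; case: ifP => k_last.
  by rewrite ffunE; apply: eq_bigr => w _; rewrite ffunE k_last ffunE.
by rewrite big1 // => w _; rewrite ffunE k_last mulr0.
Qed.

End TensorAction.

Lemma tensor_vn_eq0 (R : pzRingType) n r (x : tensor_space R n.+1 r) :
  tensor_vn x = 0 -> x = 0.
Proof.
move=> vn_x0; apply/ffunP => k; rewrite ffunE.
pose k1 : {ffun 'I_r.+1 -> 'I_n.+1} :=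
  [ffun i => if unlift ord_max i is Some i' then k i' else ord_max].
move/ffunP/(_ k1): vn_x0; rewrite !ffunE unlift_none /= eqxx => <-.
congr (x _); apply/ffunP => i; rewrite !ffunE.
have -> : widen_ord (leqnSn r) i = lift ord_max i.
  by apply: val_inj; rewrite /= /bump leqNgt ltn_ord.
by rewrite (liftK ord_max i).
Qed.

Definition inord_ffun (n r : nat) : {ffun 'I_r -> 'I_n.+1} :=
  [ffun i : 'I_r => inord i].

Lemma inord_ffun_codom n r (m : 'I_n.+1) :
  (m < r)%N -> m \in codom (inord_ffun n r).
Proof.
by move=> m_lt_r; apply/codomP; exists (Ordinal m_lt_r); rewrite ffunE inord_val.
Qed.

Theorem lemma4p1 (R : pzRingType) (n r : nat) (hn : (0 < n)%N) (hr : (0 < r)%N) :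
  ((n <= r)%N ->
     forall a : {ffun 'S_n -> R},
       (forall x : tensor_space R n r, Phi a x = 0) -> a = 0)
  /\
  ((n <= r.+1)%N ->
     forall a : {ffun 'S_n -> R},
       (forall w : 'S_n, a w != 0 -> fixes_last w) ->
       (forall x : tensor_space R n r, Phi a (tensor_vn x) = 0) -> a = 0).
Proof.
case: n hn => // n _; split.
- move=> n_le_r a Phi_a0.
  apply: (Phi_basis_faithful (j := inord_ffun n r)) (Phi_a0 _) => w w' _ _.
  apply: perm_comp_inj => m /negP[]; apply: inord_ffun_codom.
  exact: leq_trans (ltn_ord m) n_le_r.
- move=> n_le_r a fix_supp Phi_a0.
  have Phi_a0' (x : tensor_space R n.+1 r) : Phi a x = 0.
    by apply: tensor_vn_eq0; rewrite -Phi_tensor_vn.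
  apply: (Phi_basis_faithful (j := inord_ffun n r)) (Phi_a0' _) => w w' aw aw'.
  apply: perm_comp_inj => m; have [m_lt_r|r_le_m _] := ltnP m r.
    by rewrite inord_ffun_codom.
  have m_last : val m = n.
    apply/eqP; rewrite eqn_leq -ltnS ltn_ord.
    exact: leq_trans (n_le_r : (n <= r)%N) r_le_m.
  by rewrite fix_supp ?fix_supp.
Qed.
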